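(* Let $n\ge2$, $r\ge3n+2$ and $s=r(3n+2)+3$. The numerical semigroup $\Gamma_{B_{nr}}=\langle s,\,s+3,\,s+3n+1,\,s+3n+2\rangle$ is homogeneous.
   Context: For a numerical semigroup $\Gamma=\langle n_1,\dots,n_e\rangle$ (minimally generated, here with $n_1=s$) and $0\neq t\in\Gamma$, the set of lengths is $\mathcal T(t)=\{\sum_i r_i : t=\sum_i r_in_i,\ r_i\in\mathbb{N}\}$. A subset $T\subset\Gamma$ is homogeneous if it is empty or $\mathcal T(t)$ is a singleton for all $0\neq t\in T$. $\Gamma$ is homogeneous if the Apéry set $\mathrm{Ap}(\Gamma,n_1)=\{t\in\Gamma: t-n_1\notin\Gamma\}$ is homogeneous. *)

From mathcomp Require Import all_boot.
Set Implicit Arguments. Unset Strict Implicit. Unset Printing Implicit Defensive.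

(* A numerical semigroup is given by its list of generators [gens = n_1; ...; n_e].
   A factorization of t is a coefficient list r (same length) with
   t = \sum_i r_i n_i; its length is \sum_i r_i. *)
Definition is_factorization (gens : seq nat) (t : nat) (r : seq nat) : Prop :=
  size r = size gens /\
  t = \sum_(i < size gens) nth 0 r i * nth 0 gens i.

Definition in_semigroup (gens : seq nat) (t : nat) : Prop :=
  exists r, is_factorization gens t r.

Definition is_length (gens : seq nat) (t l : nat) : Prop :=
  exists r, is_factorization gens t r /\ sumn r = l.

(* Apery set Ap(Gamma, n_1) with n_1 the first generator:
   t in Gamma and t - n_1 not in Gamma (as an integer; so t < n_1 counts as
   t - n_1 notin Gamma). *)
Definition in_apery (gens : seq nat) (t : nat) : Prop :=
  in_semigroup gens t /\ ~ (head 0 gens <= t /\ in_semigroup gens (t - head 0 gens)).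

Definition homogeneous_subset (gens : seq nat) (T : nat -> Prop) : Prop :=
  forall t, T t -> t <> 0 -> exists l, forall l', is_length gens t l' <-> l' = l.

Definition homogeneous_semigroup (gens : seq nat) : Prop :=
  homogeneous_subset gens (in_apery gens).

(* Every factorization of an element t of Ap(Γ, s) avoids the generator s:
   a copy of s could be removed.  The same removal argument applied to the
   relations (3n+2)(s+3n+1) = s + (3n+1)(s+3n+2) and
   y(s+3n+1) + (r+2-y)(s+3n+2) = s + (r+2)s + (6n+1-y), y <= 3n+1, shows
   that the coefficients y, z of s+3n+1, s+3n+2 satisfy y + z <= r + 1.
   Then t = L(s+3) + y(3n-2) + z(3n-1) with remainder < s+3, where
   L = x + y + z is the length, so L = t %/ (s+3) for every factorization. *)

From mathcomp Require Import all_boot.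
From mathcomp Require Import zify.

Set Implicit Arguments.
Unset Strict Implicit.

Lemma in_semigroupD (gens : seq nat) (u v : nat) :
  in_semigroup gens u -> in_semigroup gens v -> in_semigroup gens (u + v).
Proof.
move=> [ru [su ->]] [rv [sv ->]].
exists [seq nth 0 ru i + nth 0 rv i | i <- iota 0 (size gens)].
split; first by rewrite size_map size_iota.
rewrite -big_split /=; apply: eq_bigr => i _.
by rewrite (nth_map 0) ?size_iota // nth_iota // mulnDl.
Qed.

Lemma in_apery_no_shift (gens : seq nat) (t w v : nat) :
  in_apery gens t -> t = head 0 gens + (w + v) ->
  in_semigroup gens w -> in_semigroup gens v -> False.
Proof.
move=> [_ not_shift] t_eq w_mem v_mem; apply: not_shift; rewrite t_eq.
by rewrite leq_addr addKn; split=> //; apply: in_semigroupD.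
Qed.

Section FourGenerators.

Variables g0 g1 g2 g3 : nat.

Lemma is_factorization4 (t : nat) (rr : seq nat) :
  is_factorization [:: g0; g1; g2; g3] t rr <->
  exists a x y z, rr = [:: a; x; y; z] /\ t = a * g0 + x * g1 + y * g2 + z * g3.
Proof.
split.
  case: rr => [|a [|x [|y [|z [|? ?]]]]] [//= _ ->].
  by exists a, x, y, z; rewrite !big_ord_recl big_ord0 /= addn0 !addnA.
move=> [a [x [y [z [-> ->]]]]]; split=> //.
by rewrite !big_ord_recl big_ord0 /= addn0 !addnA.
Qed.

Lemma in_semigroup4 (t : nat) :
  in_semigroup [:: g0; g1; g2; g3] t <->
  exists a x y z, t = a * g0 + x * g1 + y * g2 + z * g3.
Proof.
split=> [[rr /is_factorization4 [a [x [y [z [_ ->]]]]]] | [a [x [y [z ->]]]]].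
  by exists a, x, y, z.
by exists [:: a; x; y; z]; apply/is_factorization4; exists a, x, y, z.
Qed.

End FourGenerators.

Section SemigroupB.

Variables n r : nat.
Hypotheses (hn : 2 <= n) (hr : 3 * n + 2 <= r).

Local Notation s := (r * (3 * n + 2) + 3).
Local Notation gens := [:: s; s + 3; s + 3 * n + 1; s + 3 * n + 2].
Local Notation combo a x y z :=
  (a * s + x * (s + 3) + y * (s + 3 * n + 1) + z * (s + 3 * n + 2)).

Lemma in_semigroup_combo (a x y z : nat) : in_semigroup gens (combo a x y z).
Proof. by apply/in_semigroup4; exists a, x, y, z. Qed.

Lemma in_semigroup_residue (c : nat) :
  3 * n <= c <= 6 * n + 1 -> in_semigroup gens ((r + 2) * s + c).
Proof.
move=> /andP [c_ge c_le].
suff [x [y [z [xyz_le ->]]]] : exists x y z,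
    x + y + z <= r + 2 /\ c = 3 * x + (3 * n + 1) * y + (3 * n + 2) * z.
  apply/in_semigroup4; exists (r + 2 - (x + y + z)), x, y, z.
  move: xyz_le => /subnK; move: (r + 2 - _) => w <-; lia.
have c_eq := divn_eq c 3; have := ltn_pmod c (isT : 0 < 3).
case: (c %% 3) c_eq => [|[|[|//]]] c_eq _.
- exists (c %/ 3), 0, 0; lia.
- exists (c %/ 3 - n), 1, 0; lia.
- exists (c %/ 3 - n), 0, 1; lia.
Qed.

Lemma apery_combo_first0 (a x y z : nat) :
  in_apery gens (combo a x y z) -> a = 0.
Proof.
case: a => // a ap; exfalso.
apply: (in_apery_no_shift ap _ (in_semigroup_combo a 0 0 0)
                               (in_semigroup_combo 0 x y z)).
rewrite [head _ _]/=; lia.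
Qed.

Lemma apery_combo_third_lt (x y z : nat) :
  in_apery gens (combo 0 x y z) -> y < 3 * n + 2.
Proof.
rewrite ltnNge => ap; apply/negP => /subnK; move: (y - _) => y' y_eq.
apply: (in_apery_no_shift ap _ (in_semigroup_combo 0 0 0 (3 * n + 1))
                               (in_semigroup_combo 0 x y' z)).
rewrite [head _ _]/= -y_eq; lia.
Qed.

Lemma apery_combo_sum_le (x y z : nat) :
  in_apery gens (combo 0 x y z) -> y + z <= r + 1.
Proof.
move=> ap; have y_lt := apery_combo_third_lt ap.
rewrite leqNgt; apply/negP => yz_gt.
have [z0 [z' [z0_eq z_eq]]] : exists z0 z', y + z0 = r + 2 /\ z = z0 + z'.
  by exists (r + 2 - y), (z - (r + 2 - y)); lia.
have residue_mem : in_semigroup gens ((r + 2) * s + (6 * n + 1 - y)).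
  by apply: in_semigroup_residue; lia.
apply: (in_apery_no_shift ap _ residue_mem (in_semigroup_combo 0 x 0 z')).
rewrite [head _ _]/= z_eq; nia.
Qed.

Lemma combo_divn (x y z : nat) :
  y + z <= r + 1 -> combo 0 x y z %/ (s + 3) = x + y + z.
Proof.
move=> yz_le.
have rem_lt : y * (3 * n - 2) + z * (3 * n - 1) < s + 3.
  have : (y + z) * (3 * n - 1) <= (r + 1) * (3 * n - 1).
    by rewrite leq_mul2r yz_le orbT.
  nia.
have t_eq : combo 0 x y z =
    (x + y + z) * (s + 3) + (y * (3 * n - 2) + z * (3 * n - 1)).
  by nia.
by rewrite t_eq divnMDl ?addn_gt0 ?orbT // divn_small ?addn0.
Qed.

Lemma apery_length (t l : nat) :
  in_apery gens t -> is_length gens t l -> l = t %/ (s + 3).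
Proof.
move=> ap [rr [/is_factorization4 [a [x [y [z [-> t_eq]]]]] <-]].
rewrite t_eq in ap *; have a0 := apery_combo_first0 ap; subst a.
by rewrite combo_divn /= ?(apery_combo_sum_le ap) // addn0 !addnA.
Qed.

End SemigroupB.

Theorem mainTheorem7 (n r : nat) (hn : 2 <= n) (hr : 3 * n + 2 <= r) :
  let s := r * (3 * n + 2) + 3 in
  homogeneous_semigroup [:: s; s + 3; s + 3 * n + 1; s + 3 * n + 2].
Proof.
move=> s t ap _; exists (t %/ (s + 3)) => l; split; first exact: (apery_length hn hr).
have [[rr t_rr] _] := ap.
by move=> ->; exists rr; split=> //; apply: (apery_length hn hr ap); exists rr.
Qed.
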